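(* Let $\mathcal G$ be a finite set of attributed graphs. Let $k^{\mathrm{WV}}(G,H)=\sum_{v\in V(G)}\sum_{v'\in V(H)}k_W(v,v')\cdot k_V(v,v')$ be a weighted vertex kernel, let $\phi^W$ be a feature map for $k_W$, and let $\widetilde\phi^V$ be a finite-dimensional approximative mapping for $k_V$, meaning that for any $\varepsilon>0$ and $\delta\in[0,1]$, with probability $1-\delta$, $\sup_{v,w\in V(G)}\left|\langle\widetilde\phi^V(v),\widetilde\phi^V(w)\rangle-k_V(v,w)\right|<\varepsilon$. Then one can compute an approximative feature map $\widetilde\phi^{\mathrm{WV}}$ for $k^{\mathrm{WV}}$ such that, with any constant probability, $\sup_{G,H\in\mathcal G}\left|\langle\widetilde\phi^{\mathrm{WV}}(G),\widetilde\phi^{\mathrm{WV}}(H)\rangle-k^{\mathrm{WV}}(G,H)\right|<\lambda$ for any $\lambda>0$.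
   Context: An attributed graph is a finite graph $G$ with a function assigning each vertex an attribute in $\mathbb R^d$; $k_V$ is a kernel on vertex attributes (e.g. Gaussian RBF) and $k_W$ is a kernel on vertices determining a weight for a vertex pair. A feature map of a kernel $k$ is a map $\phi$ with $k(x,y)=\langle\phi(x),\phi(y)\rangle$. *)

From HB Require Import structures.
From mathcomp Require Import all_boot all_order all_algebra.
From mathcomp Require Import all_classical all_reals all_analysis.
Set Implicit Arguments. Unset Strict Implicit. Unset Printing Implicit Defensive.
Import Order.TTheory GRing.Theory Num.Theory.
Local Open Scope classical_set_scope.
Local Open Scope ring_scope.

Definition dotv (R : realType) (n : nat) (u v : 'rV[R]_n) : R :=
  \sum_(i < n) u ord0 i * v ord0 i.

Definition is_feature_map (R : realType) (X : Type) (n : nat)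
  (k : X -> X -> R) (phi : X -> 'rV[R]_n) : Prop :=
  forall x y, k x y = dotv (phi x) (phi y).

Definition kWV (R : realType) (V Gi : finType) (gV : Gi -> {set V})
  (kW : V -> V -> R) (a : nat) (attr : V -> 'rV[R]_a)
  (kV : 'rV[R]_a -> 'rV[R]_a -> R) (G H : Gi) : R :=
  \sum_(v in gV G) \sum_(w in gV H) kW v w * kV (attr v) (attr w).

(* "With probability at least p, the event E holds": there is a measurable
   event of probability >= p contained in E (inner probability, so no
   measurability assumption on the random maps is needed). *)
Definition with_prob_ge (R : realType) (d : measure_display)
  (Om : measurableType d) (P : probability Om R) (p : R) (E : set Om) : Prop :=
  exists A : set Om, [/\ measurable A, A `<=` E & (p%:E <= P A)%E].

Definition approx_map (R : realType) (d : measure_display)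
  (Om : measurableType d) (P : probability Om R) (V : finType)
  (dim : R -> R -> nat) (phi : forall eps delta : R, Om -> V -> 'rV[R]_(dim eps delta))
  (k : V -> V -> R) : Prop :=
  forall eps delta : R, 0 < eps -> 0 <= delta <= 1 ->
    with_prob_ge P (1 - delta)
      [set om | forall v w : V,
         `| dotv (phi eps delta om v) (phi eps delta om w) - k v w | < eps].

From HB Require Import structures.
From mathcomp Require Import all_boot all_order all_algebra.
From mathcomp Require Import all_classical all_reals all_analysis.
Import Order.TTheory GRing.Theory Num.Theory.
Local Open Scope classical_set_scope.
Local Open Scope ring_scope.

(* The graph feature map is phi(G) = sum_{v in V(G)} phiW(v) (x) phiV(v),
   a sum of tensor products flattened by [mxvec].  Its inner products are
   sum_{v,w} kW(v,w) <phiV v, phiV w>, so each term deviates from the exact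
   kernel by at most |kW(v,w)| eps, and the total error is at most
   eps * sum_{v,w} |kW(v,w)|.  Taking eps = lam / (1 + sum |kW|) and the
   same failure probability delta gives the claim. *)

Section TensorFeatureMap.
Variable R : realType.

Lemma dotv_mxvec m n (A B : 'M[R]_(m, n)) :
  dotv (mxvec A) (mxvec B) = \sum_i \sum_j A i j * B i j.
Proof.
rewrite /dotv (reindex _ (curry_mxvec_bij _ _)) /= pair_bigA /=.
by apply: eq_bigr => -[i j] _; rewrite !mxvecE.
Qed.

Variables (V : finType) (m n : nat) (f : V -> 'rV[R]_m) (g : V -> 'rV[R]_n).

Definition tensor_sum (S : {set V}) : 'M[R]_(m, n) := \sum_(v in S) (f v)^T *m g v.

Lemma tensor_sumE S i j : tensor_sum S i j = \sum_(v in S) f v 0 i * g v 0 j.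
Proof.
rewrite /tensor_sum summxE; apply: eq_bigr => v _.
by rewrite mxE big_ord1 !mxE.
Qed.

Lemma dotv_tensor_sum S T :
  dotv (mxvec (tensor_sum S)) (mxvec (tensor_sum T)) =
  \sum_(v in S) \sum_(w in T) dotv (f v) (f w) * dotv (g v) (g w).
Proof.
rewrite dotv_mxvec /dotv.
under eq_bigr => i _ do under eq_bigr => j _ do rewrite !tensor_sumE mulr_suml.
under eq_bigr => i _ do under eq_bigr => j _ do
  under eq_bigr => v _ do rewrite mulr_sumr.
under eq_bigr => i _ do rewrite exchange_big /=.
rewrite exchange_big /=; apply: eq_bigr => v _.
under eq_bigr => i _ do rewrite exchange_big /=.
rewrite exchange_big /=; apply: eq_bigr => w _.
rewrite mulr_suml; apply: eq_bigr => i _.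
rewrite mulr_sumr; apply: eq_bigr => j _.
by rewrite mulrACA.
Qed.

End TensorFeatureMap.

Arguments tensor_sum {R V m n} f g S.

Lemma ler_sum_mem {R : numDomainType} {I : finType} (A : {pred I}) (F : I -> R) :
  (forall i, 0 <= F i) -> \sum_(i in A) F i <= \sum_i F i.
Proof. by move=> F_ge0; rewrite [leRHS](bigID (mem A)) /= ler_wpDr ?sumr_ge0. Qed.

Lemma norm_weighted_sum2_le {R : numDomainType} {V : finType} (S T : {set V})
    (c x y : V -> V -> R) (eps : R) :
  (forall v w, `|x v w - y v w| <= eps) ->
  `|\sum_(v in S) \sum_(w in T) c v w * x v w
    - \sum_(v in S) \sum_(w in T) c v w * y v w|
  <= (\sum_v \sum_w `|c v w|) * eps.
Proof.
move=> xy_eps.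
have eps_ge0 (v : V) : 0 <= eps := le_trans (normr_ge0 _) (xy_eps v v).
rewrite -sumrB; under eq_bigr => v _ do rewrite -sumrB.
apply: le_trans (ler_norm_sum _ _ _) _.
apply: (@le_trans _ _ (\sum_(v in S) \sum_(w in T) `|c v w| * eps)).
  apply: ler_sum => v _; apply: le_trans (ler_norm_sum _ _ _) _.
  by apply: ler_sum => w _; rewrite -mulrBr normrM ler_wpM2l.
rewrite mulr_suml; apply: le_trans (ler_sum_mem S _ _) => [|v]; last first.
  by rewrite mulr_ge0 ?sumr_ge0 ?(eps_ge0 v).
apply: ler_sum => v _; rewrite mulr_suml.
by apply: ler_sum_mem => w; rewrite mulr_ge0 ?(eps_ge0 v).
Qed.

Theorem proposition6 (R : realType) (V Gi : finType)
  (gV : Gi -> {set V}) (gE : Gi -> rel V)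
  (m : nat) (kW : V -> V -> R) (phiW : V -> 'rV[R]_m)
  (hW : is_feature_map kW phiW)
  (lam : R) (hlam : 0 < lam) (delta : R) (hdelta : 0 <= delta <= 1) :
  exists (eps delta' : R) (D : nat -> nat)
         (F : forall n : nat, (V -> 'rV[R]_n) -> Gi -> 'rV[R]_(D n)),
    [/\ 0 < eps, 0 <= delta' <= 1 &
    forall (a : nat) (attr : V -> 'rV[R]_a) (kV : 'rV[R]_a -> 'rV[R]_a -> R)
           (d : measure_display) (Om : measurableType d) (P : probability Om R)
           (dimV : R -> R -> nat)
           (phiV : forall e q : R, Om -> V -> 'rV[R]_(dimV e q)),
      approx_map P phiV (fun v w => kV (attr v) (attr w)) ->
      with_prob_ge P (1 - delta)
        [set om | forall G H : Gi,
           `| dotv (F _ (phiV eps delta' om) G) (F _ (phiV eps delta' om) H)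
              - kWV gV kW attr kV G H | < lam]].
Proof.
set W := \sum_v \sum_w `|kW v w|.
have W_ge0 : 0 <= W by do 2![apply: sumr_ge0 => ? _].
have W1_gt0 : 0 < W + 1 by rewrite ltr_wpDl.
have eps_gt0 : 0 < lam / (W + 1) by rewrite divr_gt0.
have W_eps_lt : W * (lam / (W + 1)) < lam.
  by rewrite mulrA ltr_pdivrMr // mulrC ltr_pM2l // ltrDl.
exists (lam / (W + 1)), delta, (fun n => (m * n)%N),
  (fun n phi G => mxvec (tensor_sum phiW phi (gV G))).
split=> // a attr kV d Om P dimV phiV approxV.
have [A [mA A_good PA]] := approxV _ _ eps_gt0 hdelta.
exists A; split=> // om /A_good /= close G H.
rewrite dotv_tensor_sum /kWV.
under eq_bigr => v _ do under eq_bigr => w _ do rewrite -hW.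
have := norm_weighted_sum2_le (gV G) (gV H) kW _ _ _ (fun v w => ltW (close v w)).
by move/le_lt_trans; apply.
Qed.
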